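(* Let $\vec o_L\in\mathbb Z_2^{m_L}$ denote the logical measurement results (after syndrome measurement and correction) of a Clifford circuit with some input codeword. Consider any undetectable circuit-level Pauli error corresponding to $e\in\mathcal P_{n(T+1)}$ in the spacetime code, arising from the circuit error together with the subsequent correction from some decoder. Then $$\mathbb P^{(e)}_L(\vec o_L)=\mathbb P_L(\vec o_L+\vec f_L(e)),$$ where $\mathbb P_L$ is the ideal logical outcome distribution, and the logical error $\vec f_L(e)\in\mathbb Z_2^{m_L}$ equals $(\langle e,L'(\vec u^L)\rangle)_{\vec u^L\in\mathcal K^L}$.
   Context: Pauli operators are taken without phases; $\langle A,B\rangle=0$ if $A,B$ commute and $1$ otherwise. A non-adaptive Clifford circuit on $n$ qubits has time steps $t=1,\dots,T$: at step $t$, Pauli measurements (if any) are performed at time slice $t-0.5$ and then a Clifford unitary $U_t$ is applied. For $t\le t'$ let $U_{t,t'}=U_{t'-1}\cdots U_t$. The spacetime code has $n(T+1)$ qubits $(q,t-0.5)$; for $F\in\mathcal P_{n(T+1)}$, $F_{t-0.5}$ is its component at slice $t-0.5$, and $\kappa_{t-0.5}(O)$ places $O\in\mathcal P_n$ at that slice with identity elsewhere. $(\overrightarrow F)_{t-0.5}=\prod_{t'=1}^{t}U_{t',t}F_{t'-0.5}U_{t',t}^\dagger$ and $(\overleftarrow F)_{t-0.5}=\prod_{t'=t}^{T+1}U_{t,t'}^\dagger F_{t'-0.5}U_{t,t'}$. A circuit error inserting $e_t$ before step $t$ is the spacetime Pauli $e=\prod_t\kappa_{t-0.5}(e_t)$.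 The input is a codeword of a stabilizer code with generators $S^{(\mathrm{ini})}_1,\dots,S^{(\mathrm{ini})}_s$, and the circuit measures $M^{(\mathrm{circ})}_1,\dots,M^{(\mathrm{circ})}_m$. $\vec E=(S^{(\mathrm{ini})}_1,\dots,S^{(\mathrm{ini})}_s,M^{(\mathrm{circ})}_1,\dots,M^{(\mathrm{circ})}_m)$, $t_j$ is the time step of $E_j$ ($0$ for initial stabilizers), and $\vec o\in\mathbb Z_2^{s+m}$ is the outcome vector. $\mathcal O^\perp$ is the set of parity checks $\vec u$ satisfied deterministically by noiseless outcomes; an error is undetectable if it flips no parity check. $\mathcal K^L$ is a set of $m_L$ linearly independent vectors $\vec u^L\in\mathbb Z_2^{s+m}$ such that in the noiseless circuit the logical outcomes are $\vec o_L=(\vec u^L\cdot\vec o)_{\vec u^L\in\mathcal K^L}$. Measured spacetime logical generators: $L'(\vec u^L)=\overleftarrow{\prod_{j=s+1}^{s+m}\kappa_{t_j-0.5}(E_j^{u^L_j})}$. Known fact (effect of faults): with error $e$ the physical outcome distribution becomes $\mathbb P(\vec o+\vec f(e))$, where $f(e)_j=0$ for $j\le s$ and $f(e)_{s+i}=\langle(\overrightarrow e)_{t_{s+i}-0.5},M^{(\mathrm{circ})}_i\rangle$. *)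

(* Phaseless Pauli operators are binary symplectic row vectors
   over 'F_2 (first n entries: X part, last n entries: Z part). *)
From HB Require Import structures.
From mathcomp Require Import all_boot all_order all_algebra.
Set Implicit Arguments. Unset Strict Implicit. Unset Printing Implicit Defensive.
Import GRing.Theory Num.Theory.
Local Open Scope ring_scope.

Definition pauli (n : nat) := 'rV['F_2]_(n + n).

Definition symJ (n : nat) : 'M['F_2]_(n + n) := block_mx 0 1%:M 1%:M 0.

(* <A,B> = 0 iff A, B commute, 1 otherwise *)
Definition symp (n : nat) (a b : pauli n) : 'F_2 := (a *m symJ n *m b^T) 0 0.

(* Spacetime Paulis in P_{n(T+1)}: component at slice t-0.5 (t = 1..T+1) is
   stored at index t-1 : 'I_T.+1. *)
Definition stpauli (n T : nat) := {ffun 'I_T.+1 -> pauli n}.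

Definition stsymp (n T : nat) (e f : stpauli n T) : 'F_2 :=
  \sum_(a : 'I_T.+1) symp (e a) (f a).

(* The Clifford unitary U_t (t = 1..T, stored at index t-1 : 'I_T) is given by
   its (phaseless) conjugation action P |-> U_t P U_t^dagger, a symplectic
   matrix acting on row vectors: P |-> P *m U_t. *)
Definition clifford_at (n T : nat) (U : 'I_T -> 'M['F_2]_(n + n)) (b : nat)
  : 'M['F_2]_(n + n) :=
  match @insub nat (fun k => (k < T)%N) 'I_T b with Some i => U i | None => 1%:M end.

(* conjugation action of U_{t,t'} = U_{t'-1} ... U_t, from slice index a = t-1
   to slice index a' = t'-1 *)
Definition prop_mx (n T : nat) (U : 'I_T -> 'M['F_2]_(n + n)) (a a' : nat)
  : 'M['F_2]_(n + n) :=
  foldl (fun M b => M *m clifford_at U b) 1%:M (iota a (a' - a)).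

(* forward propagation  (F->)_{t-0.5} = prod_{t'<=t} U_{t',t} F_{t'-0.5} U_{t',t}^dag *)
Definition fwd (n T : nat) (U : 'I_T -> 'M['F_2]_(n + n)) (F : stpauli n T)
  : stpauli n T :=
  [ffun a : 'I_T.+1 => \sum_(a' : 'I_T.+1 | (a' <= a)%N) F a' *m prop_mx U a' a].

(* backward propagation (<-F)_{t-0.5} = prod_{t'>=t} U_{t,t'}^dag F_{t'-0.5} U_{t,t'} *)
Definition bwd (n T : nat) (U : 'I_T -> 'M['F_2]_(n + n)) (F : stpauli n T)
  : stpauli n T :=
  [ffun a : 'I_T.+1 => \sum_(a' : 'I_T.+1 | (a <= a')%N) F a' *m invmx (prop_mx U a a')].

(* slice index t_i - 1 of circuit measurement i (measured at step tm i + 1) *)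
Definition meas_slice (T m : nat) (tm : 'I_m -> 'I_T) (i : 'I_m) : 'I_T.+1 :=
  widen_ord (leqnSn T) (tm i).

Definition dot (k : nat) (u o : 'rV['F_2]_k) : 'F_2 := (u *m o^T) 0 0.

Definition fvec (n T s m : nat) (U : 'I_T -> 'M['F_2]_(n + n))
  (Mc : 'I_m -> pauli n) (tm : 'I_m -> 'I_T) (e : stpauli n T)
  : 'rV['F_2]_(s + m) :=
  \row_(j < s + m) match split j with
                   | inl _ => 0
                   | inr i => symp (fwd U e (meas_slice tm i)) (Mc i)
                   end.

(* L'(u) = <- ( prod_{j > s} kappa_{t_j-0.5}(E_j^{u_j}) ) *)
Definition Lprime (n T s m : nat) (U : 'I_T -> 'M['F_2]_(n + n))
  (Mc : 'I_m -> pauli n) (tm : 'I_m -> 'I_T) (u : 'rV['F_2]_(s + m))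
  : stpauli n T :=
  bwd U [ffun a : 'I_T.+1 =>
           \sum_(i : 'I_m | meas_slice tm i == a) u 0 (rshift s i) *: Mc i].

(* logical error f_L(e) = (<e, L'(u^L)>)_{u^L in K^L}; K^L = rows of KL *)
Definition fL (n T s m mL : nat) (U : 'I_T -> 'M['F_2]_(n + n))
  (Mc : 'I_m -> pauli n) (tm : 'I_m -> 'I_T) (KL : 'M['F_2]_(mL, s + m))
  (e : stpauli n T) : 'rV['F_2]_mL :=
  \row_(k < mL) stsymp e (Lprime U Mc tm (row k KL)).

(* logical outcome distribution induced by an outcome distribution P:
   o_L = (u^L . o)_{u^L in K^L} = o *m KL^T *)
Definition logdist (R : numDomainType) (k mL : nat) (KL : 'M['F_2]_(mL, k))
  (P : 'rV['F_2]_k -> R) (oL : 'rV['F_2]_mL) : R :=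
  \sum_(o : 'rV['F_2]_k | o *m KL^T == oL) P o.

(* O^perp: parity checks satisfied deterministically by noiseless outcomes *)
Definition parity_checks (R : numDomainType) (k : nat) (P : 'rV['F_2]_k -> R)
  : pred 'rV['F_2]_k :=
  [pred u | [forall o, (P o != 0) ==> (dot u o == 0)]].

Definition undetectable (R : numDomainType) (k : nat) (P : 'rV['F_2]_k -> R)
  (f : 'rV['F_2]_k) : Prop :=
  forall u, u \in parity_checks P -> dot u f = 0.

(* The logical outcomes are the linear image o |-> o *m KL^T of the physical
   outcomes, so flipping the physical outcomes by f(e) shifts the logical ones
   by f(e) *m KL^T.  That shift is the pairing of e with the measured logical
   generators L'(u) because forward and backward propagation are adjoint for
   the spacetime symplectic form: a Clifford acts by a symplectic matrix S,
   and <x S, y> = <x, y S^-1>. *)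
From HB Require Import structures.
From mathcomp Require Import all_boot all_order all_algebra.
Import GRing.Theory Num.Theory.
Local Open Scope ring_scope.
Set Implicit Arguments. Unset Strict Implicit.

Section Symplectic.
Variable n : nat.

Definition symplectic (S : 'M['F_2]_(n + n)) : Prop := S *m symJ n *m S^T = symJ n.

Lemma symplectic1 : symplectic 1%:M.
Proof. by rewrite /symplectic mul1mx trmx1 mulmx1. Qed.

Lemma symplecticM (A B : 'M['F_2]_(n + n)) :
  symplectic A -> symplectic B -> symplectic (A *m B).
Proof.
rewrite /symplectic => HA HB.
by rewrite trmx_mul !mulmxA -(mulmxA A B) -(mulmxA A) HB HA.
Qed.

Lemma symJK : symJ n *m symJ n = 1%:M.
Proof.
rewrite /symJ mulmx_block !mulmx0 !mul0mx !mulmx1 !addr0 !add0r.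
by rewrite -scalar_mx_block.
Qed.

Lemma symplectic_unit (S : 'M['F_2]_(n + n)) : symplectic S -> S \in unitmx.
Proof.
move=> HS; have : S *m (symJ n *m S^T *m symJ n) = 1%:M by rewrite !mulmxA HS symJK.
by case/mulmx1_unit.
Qed.

Lemma symp_mulmxl (S : 'M['F_2]_(n + n)) (x y : pauli n) :
  symplectic S -> symp (x *m S) y = symp x (y *m invmx S).
Proof.
move=> HS; have Su := symplectic_unit HS.
have SJ : S *m symJ n = symJ n *m (invmx S)^T.
  by rewrite -{2}HS trmx_inv mulmxK ?unitmx_tr.
by rewrite /symp trmx_mul -!mulmxA (mulmxA S) SJ !mulmxA.
Qed.

Lemma symp_suml (I : Type) (r : seq I) (Q : pred I) (F : I -> pauli n) y :
  symp (\sum_(i <- r | Q i) F i) y = \sum_(i <- r | Q i) symp (F i) y.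
Proof. by rewrite /symp mulmx_suml mulmx_suml summxE. Qed.

Lemma symp_sumr (I : Type) (r : seq I) (Q : pred I) (F : I -> pauli n) x :
  symp x (\sum_(i <- r | Q i) F i) = \sum_(i <- r | Q i) symp x (F i).
Proof. by rewrite /symp (raddf_sum (@trmx _ _ _)) mulmx_sumr summxE. Qed.

Lemma symp_scaler (c : 'F_2) (x y : pauli n) : symp x (c *: y) = c * symp x y.
Proof. by rewrite /symp linearZ /= -scalemxAr mxE. Qed.

End Symplectic.

Section Propagation.
Variables (n T : nat) (U : 'I_T -> 'M['F_2]_(n + n)).
Hypothesis U_symplectic : forall b : 'I_T, symplectic (U b).

Lemma prop_mx_symplectic (a a' : nat) : symplectic (prop_mx U a a').
Proof.
rewrite /prop_mx; elim: (iota a (a' - a)) 1%:M (symplectic1 n) => //= b r IHr M HM.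
apply/IHr/symplecticM => //; rewrite /clifford_at.
by case: insubP => [i _ _|_]; [exact: U_symplectic | exact: symplectic1].
Qed.

Lemma stsymp_bwd (e F : stpauli n T) : stsymp e (bwd U F) = stsymp (fwd U e) F.
Proof.
rewrite /stsymp.
under eq_bigr do rewrite ffunE symp_sumr big_mkcond.
under eq_bigr do under eq_bigr do rewrite -(symp_mulmxl _ _ (prop_mx_symplectic _ _)).
under [RHS]eq_bigr do rewrite ffunE symp_suml big_mkcond.
exact: exchange_big.
Qed.

End Propagation.

Section Measurements.
Variables (n T s m : nat) (Mc : 'I_m -> pauli n) (tm : 'I_m -> 'I_T).

Lemma stsymp_measured (g : stpauli n T) (u : 'rV['F_2]_(s + m)) :
  stsymp g [ffun a => \sum_(i | meas_slice tm i == a) u 0 (rshift s i) *: Mc i]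
  = \sum_i u 0 (rshift s i) * symp (g (meas_slice tm i)) (Mc i).
Proof.
rewrite /stsymp.
under eq_bigr do rewrite ffunE symp_sumr big_mkcond /=.
rewrite exchange_big; apply: eq_bigr => i _.
rewrite -big_mkcond (big_pred1 (meas_slice tm i)) => [|a]; last by rewrite eq_sym.
by rewrite symp_scaler.
Qed.

Lemma fL_fvec (mL : nat) (U : 'I_T -> 'M['F_2]_(n + n))
    (KL : 'M['F_2]_(mL, s + m)) (e : stpauli n T) :
  (forall b, symplectic (U b)) -> fL U Mc tm KL e = fvec s U Mc tm e *m KL^T.
Proof.
move=> U_symplectic; apply/rowP => k.
rewrite !mxE /Lprime stsymp_bwd // stsymp_measured [RHS]big_split_ord /=.
rewrite [X in _ = X + _]big1 ?add0r => [|j _]; last first.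
  by rewrite !mxE (unsplitK (inl _ j)) mul0r.
by apply: eq_bigr => i _; rewrite !mxE (unsplitK (inr _ i)) mulrC.
Qed.

End Measurements.

Lemma logdist_translate (R : numDomainType) (k mL : nat) (KL : 'M['F_2]_(mL, k))
    (P Pe : 'rV['F_2]_k -> R) (f : 'rV['F_2]_k) :
  (forall o, Pe o = P (o + f)) ->
  forall oL, logdist KL Pe oL = logdist KL P (oL + f *m KL^T).
Proof.
move=> Pe_translate oL; rewrite /logdist [RHS](reindex_inj (addIr f)) /=.
by apply: eq_big => o; rewrite ?Pe_translate // mulmxDl (inj_eq (addIr _)).
Qed.

Theorem lemma15 (R : realFieldType) (n T s m mL : nat)
  (U : 'I_T -> 'M['F_2]_(n + n))
  (HU : forall b : 'I_T, U b *m symJ n *m (U b)^T = symJ n)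
  (Mc : 'I_m -> pauli n) (tm : 'I_m -> 'I_T)
  (KL : 'M['F_2]_(mL, s + m)) (HKL : row_free KL)
  (P Pe : 'rV['F_2]_(s + m) -> R)
  (HP0 : forall o, 0 <= P o) (HP1 : \sum_o P o = 1)
  (e : stpauli n T)
  (Hfault : forall o, Pe o = P (o + fvec s U Mc tm e))
  (Hundet : undetectable P (fvec s U Mc tm e)) :
  forall oL : 'rV['F_2]_mL,
    logdist KL Pe oL = logdist KL P (oL + fL U Mc tm KL e).
Proof.
by rewrite fL_fvec //; exact: logdist_translate.
Qed.
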